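(* There is a quantum communication protocol of cost $O(\log N)$ in the one-clean-qubit model for the $\mathsf{ABCD}$ problem on $N\times N$ matrices such that every \textsc{yes} instance is accepted (output 1) with probability at least $0.95$ and every \textsc{no} instance is accepted with probability at most $0.55$.
   Context: Throughout, $N=2^n$ for a positive integer $n$, and $\mathsf{SU}(N)$ denotes the group of $N\times N$ complex unitary matrices of determinant $1$. The $\mathsf{ABCD}$ problem: Alice is given $A,C\in\mathsf{SU}(N)$ explicitly and Bob is given $B,D\in\mathsf{SU}(N)$ explicitly; they must output $1$ (a \textsc{yes} instance) if $\mathrm{Tr}(ABCD)\ge 0.9N$ and $0$ (a \textsc{no} instance) if $\mathrm{Tr}(ABCD)\le 0.1N$, promised that one of these holds. One-clean-qubit (more generally $k$-clean-qubit) model of communication: the initial joint state consists of $k$ qubits in the state $\lvert 0\rangle$ ($k=1$ here) together with $m$ qubits, unentangled from these, in the maximally mixed state; the players have no other private memory. The players take turns applying unitary operators (depending on their own inputs) to all $m+k$ qubits and sending all of them to the other player. At the end an arbitrary projective measurement independent of the inputs is performed and its outcome is the output. The cost of the protocol is the number of rounds times $(m+k)$. *)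

From HB Require Import structures.
From mathcomp Require Import all_boot all_order all_algebra.
From mathcomp Require Import reals.
From mathcomp.real_closed Require Import complex.
Set Implicit Arguments. Unset Strict Implicit. Unset Printing Implicit Defensive.
Import Order.TTheory GRing.Theory Num.Theory.
Local Open Scope ring_scope.

Definition adjmx (C : numClosedFieldType) (m : nat) (A : 'M[C]_m) : 'M[C]_m :=
  (map_mx Num.conj A)^T.

Definition unitary (C : numClosedFieldType) (m : nat) (U : 'M[C]_m) : Prop :=
  U *m adjmx U = 1%:M.

Definition SU (C : numClosedFieldType) (m : nat) (U : 'M[C]_m) : Prop :=
  unitary U /\ \det U = 1.

(* orthogonal projector (outcome-1 part of a projective measurement) *)
Definition projector (C : numClosedFieldType) (m : nat) (P : 'M[C]_m) : Prop :=
  P *m P = P /\ adjmx P = P.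

(* A one-clean-qubit communication protocol for inputs that are pairs of
   N x N matrices: [m] maximally mixed qubits + 1 clean qubit, [rounds]
   rounds; in round i (0-indexed) Alice acts if i is even, Bob if i is odd,
   applying the unitary [U i X Y] on all m+1 qubits, where (X,Y) is the
   acting player's input.  [meas] is the projector onto the outcomes
   labelled with output 1 of the final input-independent projective
   measurement. *)
Record ocq_protocol (C : numClosedFieldType) (N : nat) := OCQProtocol {
  ocq_m : nat;
  ocq_rounds : nat;
  ocq_U : 'I_ocq_rounds -> 'M[C]_N -> 'M[C]_N -> 'M[C]_(2 ^ ocq_m.+1);
  ocq_meas : 'M[C]_(2 ^ ocq_m.+1)
}.
Arguments ocq_m {C N}. Arguments ocq_rounds {C N}.
Arguments ocq_U {C N}. Arguments ocq_meas {C N}.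

Definition ocq_dim (C : numClosedFieldType) (N : nat) (P : ocq_protocol C N) :=
  (2 ^ (ocq_m P).+1)%N.

Definition ocq_cost (C : numClosedFieldType) (N : nat) (P : ocq_protocol C N) : nat :=
  (ocq_rounds P * (ocq_m P).+1)%N.

Definition ocq_valid (C : numClosedFieldType) (N : nat) (P : ocq_protocol C N) : Prop :=
  (forall i X Y, SU X -> SU Y -> unitary (ocq_U P i X Y)) /\ projector (ocq_meas P).

(* initial state |0><0| (x) I/2^m : basis index = clean bit * 2^m + rest *)
Definition ocq_init (C : numClosedFieldType) (m : nat) : 'M[C]_(2 ^ m.+1) :=
  \matrix_(i, j) (if (i == j) && (i < 2 ^ m)%N then (2 ^ m)%:R^-1 else 0).

Definition ocq_total (K : numClosedFieldType) (N : nat) (P : ocq_protocol K N)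
  (A B C D : 'M[K]_N) : 'M[K]_(2 ^ (ocq_m P).+1) :=
  foldl (fun W (i : 'I_(ocq_rounds P)) =>
           (if odd i then ocq_U P i B D else ocq_U P i A C) *m W)
        1%:M (enum 'I_(ocq_rounds P)).

Definition ocq_accept (K : numClosedFieldType) (N : nat) (P : ocq_protocol K N)
  (A B C D : 'M[K]_N) : K :=
  let W := ocq_total P A B C D in
  \tr (ocq_meas P *m (W *m ocq_init K (ocq_m P) *m adjmx W)).

(* The protocol is the Hadamard test.  The clean qubit is put in the state
   |+> by a Hadamard gate and then used as the control of the four
   controlled unitaries C, B, A, D, applied in turn by Alice, Bob, Alice and
   Bob to the maximally mixed register; together they form the controlled
   version of DABC.  Measuring the clean qubit in the |+>,|-> basis then
   gives outcome |+> with probability 1/2 + Re tr(DABC) / (2N), and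
   tr(DABC) = tr(ABCD).  Hence YES instances are accepted with probability
   at least 1/2 + 0.9/2 = 0.95 and NO instances with probability at most
   1/2 + 0.1/2 = 0.55, with 4 rounds of n + 1 qubits. *)
From HB Require Import structures.
From mathcomp Require Import all_boot all_order all_algebra.
From mathcomp Require Import reals.
From mathcomp.real_closed Require Import complex.
From mathcomp Require Import ring zify.
Import Order.TTheory GRing.Theory Num.Theory.
Local Open Scope ring_scope.
Set Implicit Arguments. Unset Strict Implicit.

Section Adjoint.
Variable K : numClosedFieldType.

Lemma adjmxM m (A B : 'M[K]_m) : adjmx (A *m B) = adjmx B *m adjmx A.
Proof. by rewrite /adjmx map_mxM trmx_mul. Qed.

Lemma adjmxZ m a (A : 'M[K]_m) : adjmx (a *: A) = a^* *: adjmx A.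
Proof. by rewrite /adjmx map_mxZ linearZ. Qed.

Lemma adjmxN m (A : 'M[K]_m) : adjmx (- A) = - adjmx A.
Proof. by rewrite /adjmx map_mxN linearN. Qed.

Lemma adjmx1 m : adjmx (1%:M : 'M[K]_m) = 1%:M.
Proof. by rewrite /adjmx map_scalar_mx rmorph1 tr_scalar_mx. Qed.

Lemma adjmx0 m : adjmx (0 : 'M[K]_m) = 0.
Proof. by rewrite /adjmx map_mx0 trmx0. Qed.

Lemma adjmx_block k (A B C D : 'M[K]_k) :
  adjmx (block_mx A B C D) = block_mx (adjmx A) (adjmx C) (adjmx B) (adjmx D).
Proof. by rewrite /adjmx map_block_mx tr_block_mx. Qed.

Lemma mxtrace_adjmx m (A : 'M[K]_m) : \tr (adjmx A) = (\tr A)^*.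
Proof.
rewrite /adjmx mxtrace_tr /mxtrace rmorph_sum.
by apply: eq_bigr => i _; rewrite mxE.
Qed.

Lemma unitaryM m (A B : 'M[K]_m) : unitary A -> unitary B -> unitary (A *m B).
Proof.
by rewrite /unitary adjmxM => UA UB; rewrite mulmxA -(mulmxA A) UB mulmx1 UA.
Qed.

Section Cast.
Variables (p q : nat) (e : p = q).

Lemma castmx_mul (A B : 'M[K]_p) :
  castmx (e, e) (A *m B) = castmx (e, e) A *m castmx (e, e) B.
Proof. by case: q / e; rewrite !castmx_id. Qed.

Lemma castmx1 : castmx (e, e) (1%:M : 'M[K]_p) = 1%:M.
Proof. by case: q / e; rewrite castmx_id. Qed.

Lemma adjmx_castmx (A : 'M[K]_p) : adjmx (castmx (e, e) A) = castmx (e, e) (adjmx A).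
Proof. by case: q / e; rewrite !castmx_id. Qed.

Lemma mxtrace_castmx (A : 'M[K]_p) : \tr (castmx (e, e) A) = \tr A.
Proof. by case: q / e; rewrite castmx_id. Qed.

Lemma unitary_castmx (A : 'M[K]_p) : unitary A -> unitary (castmx (e, e) A).
Proof. by rewrite /unitary adjmx_castmx -castmx_mul => ->; rewrite castmx1. Qed.

Lemma projector_castmx (A : 'M[K]_p) : projector A -> projector (castmx (e, e) A).
Proof. by case=> AA adjA; split; rewrite ?adjmx_castmx -?castmx_mul ?AA ?adjA. Qed.

End Cast.
End Adjoint.

Section HadamardTest.
Variables (K : numClosedFieldType) (k : nat).

Definition ctrl_mx (X : 'M[K]_k) : 'M[K]_(k + k) := block_mx 1%:M 0 0 X.

Definition hadamard_mx : 'M[K]_(k + k) :=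
  sqrtC 2^-1 *: block_mx 1%:M 1%:M 1%:M (- 1%:M).

Definition plus_proj : 'M[K]_(k + k) := 2^-1 *: block_mx 1%:M 1%:M 1%:M 1%:M.

Definition clean_state : 'M[K]_(k + k) := k%:R^-1 *: block_mx 1%:M 0 0 0.

Lemma ctrl_mxM (X Y : 'M[K]_k) : ctrl_mx X *m ctrl_mx Y = ctrl_mx (X *m Y).
Proof. by rewrite mulmx_block !mulmx0 !mul0mx !mulmx1 !addr0 !add0r. Qed.

Lemma ctrl_mx_unitary (X : 'M[K]_k) : unitary X -> unitary (ctrl_mx X).
Proof.
rewrite /unitary adjmx_block adjmx1 adjmx0 => UX.
by rewrite mulmx_block !mulmx0 !mul0mx !mulmx1 !addr0 !add0r UX -scalar_mx_block.
Qed.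

Lemma half_conj : (2^-1 : K)^* = 2^-1.
Proof. by apply: geC0_conj; rewrite invr_ge0 ler0n. Qed.

Lemma sqrt_half_conj : (sqrtC 2^-1 : K)^* = sqrtC 2^-1.
Proof. by apply: geC0_conj; rewrite sqrtC_ge0 invr_ge0 ler0n. Qed.

Lemma sqrt_half_sqr : sqrtC 2^-1 * sqrtC 2^-1 = 2^-1 :> K.
Proof. by rewrite -expr2 sqrtCK. Qed.

Lemma hadamard_mx_unitary : unitary hadamard_mx.
Proof.
rewrite /unitary adjmxZ adjmx_block adjmxN adjmx1 sqrt_half_conj.
rewrite -scalemxAl -scalemxAr scalerA sqrt_half_sqr mulmx_block.
rewrite !mulmx1 !mulmxN !mulNmx !mulmx1 opprK subrr -!mulr2n.
rewrite scale_block_mx !scaler0 -!scalerMnr !scalerMnl.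
by rewrite -mulr_natr mulVf ?pnatr_eq0 // !scale1r -scalar_mx_block.
Qed.

Lemma plus_proj_projector : projector plus_proj.
Proof.
split; last by rewrite /plus_proj adjmxZ adjmx_block adjmx1 half_conj.
rewrite /plus_proj -scalemxAl -scalemxAr scalerA mulmx_block !mulmx1 -!mulr2n.
rewrite -scaler_nat -scale_block_mx scalerA.
by rewrite mulfVK // pnatr_eq0.
Qed.

(* The controlled-M circuit maps |0> (x) v to ((|0> (x) v) + (|1> (x) M v)) / sqrt 2,
   whose |+> component is (v + M v) / 2. *)
Lemma hadamard_test (M : 'M[K]_k) : (0 < k)%N -> unitary M ->
  let W := ctrl_mx M *m hadamard_mx in
  \tr (plus_proj *m (W *m clean_state *m adjmx W)) = 2^-1 * (1 + 'Re (\tr M) / k%:R).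
Proof.
move=> k_gt0 UM W.
have -> : W = sqrtC 2^-1 *: block_mx 1%:M 1%:M M (- M).
  rewrite /W -scalemxAr mulmx_block.
  by rewrite !mulmx1 !mul0mx !mulmxN !mulmx1 !addr0 !add0r.
rewrite adjmxZ adjmx_block adjmxN adjmx1 sqrt_half_conj /plus_proj /clean_state.
rewrite -!(scalemxAl, scalemxAr) !scalerA mxtraceZ !mulmx_block.
rewrite !(mulmx1, mul1mx, mulmx0, mul0mx, addr0, add0r) UM.
rewrite mxtrace_block !mxtraceD mxtrace1 mxtrace_adjmx ReE sqrt_half_sqr.
by field; rewrite pnatr_eq0 -lt0n.
Qed.

End HadamardTest.

Section Thresholds.
Variables (K : numClosedFieldType) (N t : K).
Hypothesis N_gt0 : 0 < N.

Lemma accept_yes : 9%:R / 10%:R * N <= t -> 95%:R / 100%:R <= 2^-1 * (1 + 'Re t / N).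
Proof.
move=> tN; have /Creal_ReP -> : t \is Num.real.
  by rewrite -(ler_real tN) rpredM ?rpred_div ?realn ?gtr0_real.
rewrite -subr_ge0.
have -> : 2^-1 * (1 + t / N) - 95%:R / 100%:R = (t - 9%:R / 10%:R * N) / (2%:R * N).
  by field; rewrite gt_eqF.
by rewrite divr_ge0 ?subr_ge0 // mulr_ge0 ?ler0n ?ltW.
Qed.

Lemma accept_no : t <= 1%:R / 10%:R * N -> 2^-1 * (1 + 'Re t / N) <= 55%:R / 100%:R.
Proof.
move=> tN; have /Creal_ReP -> : t \is Num.real.
  by rewrite -(ger_real tN) rpredM ?rpred_div ?realn ?gtr0_real.
rewrite -subr_ge0.
have -> : 55%:R / 100%:R - 2^-1 * (1 + t / N) = (1%:R / 10%:R * N - t) / (2%:R * N).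
  by field; rewrite gt_eqF.
by rewrite divr_ge0 ?subr_ge0 // mulr_ge0 ?ler0n ?ltW.
Qed.

End Thresholds.

Lemma qubit_split m : (2 ^ m + 2 ^ m = 2 ^ m.+1)%N.
Proof. by rewrite expnS mul2n addnn. Qed.

(* The clean qubit is the most significant one, so [ocq_init] is the block
   matrix [clean_state] once its index is split as [2 ^ m + 2 ^ m]. *)
Lemma ocq_init_clean_state (K : numClosedFieldType) m :
  ocq_init K m = castmx (qubit_split m, qubit_split m) (clean_state K (2 ^ m)).
Proof.
apply/matrixP => i j; rewrite castmxE [RHS]mxE /ocq_init mxE.
set i' := cast_ord _ i; set j' := cast_ord _ j.
have -> : (i == j) = (i' == j') by [].
have -> : (i < 2 ^ m)%N = (i' < 2 ^ m)%N by [].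
case: (split_ordP i') => a ->; case: (split_ordP j') => b ->.
- rewrite block_mxEul mxE eq_lshift andbT.
  by case: eqVneq => _; rewrite ?mulr1 ?mulr0.
- by rewrite block_mxEur mxE eq_lrshift mulr0.
- by rewrite block_mxEdl mxE andbF mulr0.
- by rewrite block_mxEdr mxE andbF mulr0.
Qed.

Section ABCDProtocol.
Variables (K : numClosedFieldType) (n : nat).

Local Notation lift A := (castmx (qubit_split n, qubit_split n) A).

(* Alice holds (A, C) and Bob (B, D): the rounds apply, in order, the
   Hadamard gate followed by controlled-C, then controlled-B, -A and -D. *)
Definition abcd_round (i : 'I_4) (X Y : 'M[K]_(2 ^ n)) : 'M[K]_(2 ^ n.+1) :=
  lift (match val i with
        | 0 => ctrl_mx Y *m hadamard_mx K _
        | 1 | 2 => ctrl_mx X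
        | _ => ctrl_mx Y
        end).

Definition abcd_protocol : ocq_protocol K (2 ^ n) :=
  @OCQProtocol K _ n 4 abcd_round (lift (plus_proj K _)).

Lemma abcd_protocol_valid : ocq_valid abcd_protocol.
Proof.
split; last exact/projector_castmx/plus_proj_projector.
move=> i X Y [UX _] [UY _]; apply: unitary_castmx.
case: i => [[|[|[|[|i]]]] //= _]; rewrite /abcd_round /=;
  by [apply: ctrl_mx_unitary | apply/unitaryM/hadamard_mx_unitary/ctrl_mx_unitary].
Qed.

Lemma abcd_protocol_cost : ocq_cost abcd_protocol = (4 * n.+1)%N.
Proof. by []. Qed.

Lemma abcd_protocol_total (A B C D : 'M[K]_(2 ^ n)) :
  ocq_total abcd_protocol A B C D = lift (ctrl_mx (D *m A *m B *m C) *m hadamard_mx K _).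
Proof.
rewrite /ocq_total /= !enum_ordSl enum_ord0 /= /abcd_round /= mulmx1.
by rewrite -!castmx_mul !mulmxA !ctrl_mxM.
Qed.

Lemma abcd_protocol_accept (A B C D : 'M[K]_(2 ^ n)) :
  SU A -> SU B -> SU C -> SU D ->
  ocq_accept abcd_protocol A B C D =
    2^-1 * (1 + 'Re (\tr (A *m B *m C *m D)) / (2 ^ n)%:R).
Proof.
move=> [UA _] [UB _] [UC _] [UD _].
have UM := unitaryM (unitaryM (unitaryM UD UA) UB) UC.
rewrite /ocq_accept abcd_protocol_total ocq_init_clean_state /=.
rewrite adjmx_castmx -!castmx_mul mxtrace_castmx hadamard_test ?expn_gt0 //.
by rewrite [in RHS]mxtrace_mulC !mulmxA.
Qed.

End ABCDProtocol.

Theorem theorem4p1 (R : realType) :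
  exists c : nat, forall n : nat, (0 < n)%N ->
    exists P : ocq_protocol R[i] (2 ^ n),
      ocq_valid P /\ (ocq_cost P <= c * n)%N /\
      forall A B C D : 'M[R[i]]_(2 ^ n),
        SU A -> SU B -> SU C -> SU D ->
        ((9%:R / 10%:R) * (2 ^ n)%:R <= \tr (A *m B *m C *m D) ->
           95%:R / 100%:R <= ocq_accept P A B C D) /\
        (\tr (A *m B *m C *m D) <= (1%:R / 10%:R) * (2 ^ n)%:R ->
           ocq_accept P A B C D <= 55%:R / 100%:R).
Proof.
exists 8%N => n n_gt0; exists (abcd_protocol R[i] n).
split; first exact: abcd_protocol_valid.
split; first by rewrite abcd_protocol_cost; lia.
move=> A B C D SA SB SC SD; rewrite abcd_protocol_accept //.
have N_gt0 : 0 < (2 ^ n)%:R :> R[i] by rewrite ltr0n expn_gt0.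
by split; [exact: accept_yes N_gt0 | exact: accept_no N_gt0].
Qed.
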